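(* Let $n\ge3$, $\mu\in\mathbb{C}$, and let $\lambda=(\lambda_1,\dots,\lambda_n)\in\mathbb{C}^n$ satisfy $\lambda_1-\lambda_2=\cdots=\lambda_{n-2}-\lambda_{n-1}=\mu$ and $\sigma:=\lambda_{n-1}-\lambda_n\notin\mathbb{N}$. Then the element $$u_\lambda=(x_1x_2\cdots x_n)^{\mu}\sum_{i_1,\dots,i_{n-1}=0}^{\infty}\frac{(-1)^{i_1+\cdots+i_{n-1}}\langle\mu\rangle_{i_{n-1}}}{i_1!\cdots i_{n-1}!\,\langle\sigma\rangle_{i_{n-1}}}\,E_{2,1}^{i_1}E_{3,2}^{i_2}\cdots E_{n,n-1}^{i_{n-1}}v_\lambda\; x_1^{i_1}x_2^{i_2-i_1}\cdots x_{n-1}^{i_{n-1}-i_{n-2}}x_n^{-i_{n-1}}$$ of $\widetilde M$ is a singular vector of weight $\lambda$: $E_{i,j}u_\lambda=0$ for all $1\le i<j\le n$ and $E_{k,k}u_\lambda=\lambda_ku_\lambda$ for all $k$.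
   Context: $gl(n)$ has basis of matrix units $E_{i,j}$. $\langle c\rangle_i=c(c-1)\cdots(c-i+1)$, $\langle c\rangle_0=1$. $M_\lambda$ is the Verma $gl(n)$-module with highest weight vector $v_\lambda$: $E_{i,j}v_\lambda=0$ for $i<j$, $E_{k,k}v_\lambda=\lambda_kv_\lambda$. $\widetilde M$ is the space of formal series $\sum_{\vec i\in\mathbb{Z}^n}v_{\vec i}\,x_1^{i_1+\mu}\cdots x_n^{i_n+\mu}$ with $v_{\vec i}\in M_\lambda$ arbitrary, a $gl(n)$-module via $E_{j_1,j_2}(v\,x^m)=E_{j_1,j_2}(v)\,x^m+v\,(x_{j_1}\partial_{x_{j_2}}-\mu\delta_{j_1,j_2})(x^m)$ (isomorphic to the weight-completed tensor product of $M_\lambda$ with the point representation $E_{i,j}\mapsto x_i\partial_{x_j}-\mu\delta_{i,j}$). *)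

From HB Require Import structures.
From mathcomp Require Import all_boot all_order all_algebra.
From mathcomp Require Import complex reals.
From Stdlib Require Import ClassicalEpsilon.

Set Implicit Arguments.
Unset Strict Implicit.
Unset Printing Implicit Defensive.

Import Order.TTheory GRing.Theory Num.Theory.
Local Open Scope ring_scope.

Section GlModules.
(* Throughout this section the Lie algebra is gl(n+1): indices are 'I_n.+1
   (0-indexed), and the summation indices i_1..i_n are 'I_n. *)
Variables (K : fieldType) (n : nat).
Local Notation N := n.+1.

Definition falling (c : K) (i : nat) : K := \prod_(k < i) (c - k%:R).

Definition gl_action (V : lmodType K) (E : 'I_N -> 'I_N -> V -> V) : Prop :=
  (forall a b (k : K) (u w : V), E a b (k *: u + w) = k *: E a b u + E a b w) /\
  (forall a b c d (u : V),
     E a b (E c d u) - E c d (E a b u)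
     = (b == c)%:R *: E a d u - (d == a)%:R *: E c b u).

Definition hw_vector (V : lmodType K) (E : 'I_N -> 'I_N -> V -> V)
    (lam : 'I_N -> K) (w : V) : Prop :=
  (forall a b : 'I_N, (a < b)%N -> E a b w = 0) /\
  (forall k : 'I_N, E k k w = lam k *: w).

(* (V, E, v) is the Verma module M_lam with highest weight vector v_lam = v:
   characterised by its universal property: for every gl(N)-module W and every
   w in W with n^+ w = 0 and weight lam, there is a unique module morphism
   V -> W sending v to w. *)
Definition is_verma (V : lmodType K) (E : 'I_N -> 'I_N -> V -> V)
    (lam : 'I_N -> K) (v : V) : Prop :=
  gl_action E /\ hw_vector E lam v /\
  forall (W : lmodType K) (F : 'I_N -> 'I_N -> W -> W) (w : W),
    gl_action F -> hw_vector F lam w ->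
    exists phi : V -> W,
      ((forall (k : K) (x y : V), phi (k *: x + y) = k *: phi x + phi y) /\
       (forall a b (x : V), phi (E a b x) = F a b (phi x)) /\ phi v = w) /\
      (forall psi : V -> W,
         ((forall (k : K) (x y : V), psi (k *: x + y) = k *: psi x + psi y) /\
          (forall a b (x : V), psi (E a b x) = F a b (psi x)) /\ psi v = w) ->
         forall x, psi x = phi x).

(* Exponent vectors in Z^n; an element f of M~ is the formal series
   sum_m f(m) x_1^{m_1+mu} ... x_n^{m_n+mu}, with arbitrary f(m) in V. *)
Definition expo := {ffun 'I_N -> int}.
Definition tseries (V : lmodType K) := expo -> V.

Definition shiftv (a b : 'I_N) (m : expo) : expo :=
  [ffun k => m k - (k == a)%:R + (k == b)%:R].

(* Action of E_{a,b} on M~:  E_{a,b}(v x^p) = E_{a,b}(v) x^p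
   + v (x_a d/dx_b - mu delta_ab)(x^p), extended termwise.  With p = m' + mu,
   x_a d/dx_b x^p = (m'_b + mu) x^{p + e_a - e_b}, so the coefficient at m
   receives (m'_b + mu) f(m') with m' = m - e_a + e_b. *)
Definition tact (V : lmodType K) (E : 'I_N -> 'I_N -> V -> V) (mu : K)
    (a b : 'I_N) (f : tseries V) : tseries V :=
  fun m => E a b (f m)
           + (((shiftv a b m) b)%:~R + mu) *: f (shiftv a b m)
           - ((a == b)%:R * mu) *: f m.

Definition sidx := {ffun 'I_n -> nat}.

Definition iext (i : sidx) (k : nat) : nat :=
  if insub k is Some k' then i k' else 0%N.

Definition uexp (i : sidx) : expo :=
  [ffun k : 'I_N => (iext i k)%:Z - (if nat_of_ord k is k'.+1 then iext i k' else 0%N)%:Z].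

(* E_{2,1}^{i_1} E_{3,2}^{i_2} ... E_{n+1,n}^{i_n} w  (1-indexed) *)
Definition pbw (V : lmodType K) (E : 'I_N -> 'I_N -> V -> V) (i : sidx)
    (w : V) : V :=
  foldr (fun k (x : V) => iter (i k) (E (inord k.+1) (inord k)) x) w
        (enum 'I_n).

Definition ucoef (mu sigma : K) (i : sidx) : K :=
  (-1) ^+ (\sum_k i k) * falling mu (iext i n.-1)
  / ((\prod_k (i k)`!)%:R * falling sigma (iext i n.-1)).

(* u_lambda as an element of M~: the coefficient of x^{m+mu} is the term
   whose index i satisfies uexp i = m (uexp is injective, so there is at most
   one), and 0 if there is none. *)
Definition ulam (V : lmodType K) (E : 'I_N -> 'I_N -> V -> V) (mu sigma : K)
    (v : V) : tseries V :=
  fun m =>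
    match excluded_middle_informative (exists i : sidx, uexp i = m) with
    | left H => let i := proj1_sig (constructive_indefinite_description _ H) in
                ucoef mu sigma i *: pbw E i v
    | right _ => 0
    end.

End GlModules.

From mathcomp Require Import all_boot all_order all_algebra.
From mathcomp Require Import complex reals.
From mathcomp Require Import ring zify.
From Stdlib Require Import ClassicalEpsilon.

Set Implicit Arguments.
Unset Strict Implicit.
Unset Printing Implicit Defensive.
Import Order.TTheory GRing.Theory Num.Theory.
Local Open Scope ring_scope.

(* The coefficient of x^(m+mu) in u_lambda is a multiple of a PBW monomial
   E_{2,1}^{i_1} ... E_{n,n-1}^{i_{n-1}} v_lambda of weight lambda - m, which
   compensates the eigenvalue m_k of x_k d/dx_k - mu; this gives the weight.
   On M~ every E_{a,b} with a < b is an iterated commutator of the simple root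
   vectors E_{c,c+1}, so it suffices that these kill u_lambda.  E_{a,a+1}
   commutes with all factors of the monomial but E_{a+1,a}^{i_a}, and the sl(2)
   relations turn it into i_a (lambda_a - lambda_{a+1} + i_{a+1} - i_a + 1)
   times the monomial with i_a lowered by one; the operator x_a d/dx_{a+1}
   carries the term of index i to the position of index i + e_a with the
   factor mu + i_{a+1} - i_a.  The coefficients of u_lambda are exactly those
   for which the two contributions cancel. *)

Section GlAction.
Variables (K : fieldType) (n : nat) (V : lmodType K).
Variable E : 'I_n.+1 -> 'I_n.+1 -> V -> V.
Hypothesis hE : gl_action E.

Lemma gl_actD a b x y : E a b (x + y) = E a b x + E a b y.
Proof. by have := hE.1 a b 1 x y; rewrite !scale1r. Qed.

Lemma gl_act0 a b : E a b 0 = 0.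
Proof. by apply: (addrI (E a b 0)); rewrite -gl_actD !addr0. Qed.

Lemma gl_actZ a b k x : E a b (k *: x) = k *: E a b x.
Proof. by have := hE.1 a b k x 0; rewrite !addr0 gl_act0 addr0. Qed.

Lemma gl_act_comm a b c d x : b != c -> d != a ->
  E a b (E c d x) = E c d (E a b x).
Proof.
move=> /negbTE bc /negbTE da; apply/eqP; rewrite -subr_eq0.
by rewrite hE.2 bc da !scale0r subr0.
Qed.

Lemma iter_gl_actZ r c d k x : iter r (E c d) (k *: x) = k *: iter r (E c d) x.
Proof. by elim: r => //= r ->; rewrite gl_actZ. Qed.

Lemma gl_act_iter_comm r a b c d x : b != c -> d != a ->
  E a b (iter r (E c d) x) = iter r (E c d) (E a b x).
Proof. by move=> bc da; elim: r => //= r <-; rewrite gl_act_comm. Qed.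

Definition has_weight (x : V) (w : 'I_n.+1 -> K) := forall k, E k k x = w k *: x.

Lemma eq_has_weight x w w' : w =1 w' -> has_weight x w -> has_weight x w'.
Proof. by move=> ww' hw k; rewrite hw ww'. Qed.

Lemma has_weight_act c d x w : has_weight x w ->
  has_weight (E c d x) (fun k => w k + (k == c)%:R - (k == d)%:R).
Proof.
move=> hw k; have := hE.2 k k c d x.
have -> : (k == c)%:R *: E k d x = (k == c)%:R *: E c d x.
  by case: eqP => [->|]; rewrite ?scale0r.
have -> : (d == k)%:R *: E c k x = (k == d)%:R *: E c d x.
  by rewrite eq_sym; case: eqP => [->|]; rewrite ?scale0r.
rewrite hw gl_actZ => /eqP; rewrite subr_eq => /eqP ->.
by rewrite scalerBl scalerDl addrC addrA.
Qed.

Lemma has_weight_iter r c d x w : has_weight x w ->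
  has_weight (iter r (E c d) x)
             (fun k => w k + r%:R * ((k == c)%:R - (k == d)%:R)).
Proof.
move=> hw; elim: r => [|r IH] /=.
  by apply: eq_has_weight hw => k; rewrite mul0r addr0.
by apply: eq_has_weight (has_weight_act c d IH) => k; rewrite mulrSr; ring.
Qed.

Lemma gl_act_raise_iter a b y w : a != b -> E a b y = 0 -> has_weight y w ->
  forall k, E a b (iter k (E b a) y)
            = (k%:R * (w a - w b - k%:R + 1)) *: iter k.-1 (E b a) y.
Proof.
move=> ab hy hw; elim=> [|k IH] /=; first by rewrite hy mul0r scale0r.
have := hE.2 a b b a (iter k (E b a) y).
rewrite !eqxx !scale1r => /eqP; rewrite subr_eq => /eqP ->.
have hwk := has_weight_iter k b a hw.
rewrite IH gl_actZ hwk [E b b _]hwk (negbTE ab) eq_sym (negbTE ab) !eqxx.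
have -> : (k%:R * (w a - w b - k%:R + 1)) *: E b a (iter k.-1 (E b a) y)
          = (k%:R * (w a - w b - k%:R + 1)) *: iter k (E b a) y.
  by case: (k) => [|k']; rewrite ?mul0r ?scale0r.
rewrite -!scalerBl -scalerDl; congr (_ *: _).
by rewrite -[k.+1]addn1 natrD /=; ring.
Qed.

End GlAction.

Section Series.
Variables (K : fieldType) (n : nat) (V : lmodType K).
Variable E : 'I_n.+1 -> 'I_n.+1 -> V -> V.
Hypothesis hE : gl_action E.
Variable mu : K.

Lemma shiftvE a b (e : expo n) k :
  shiftv a b e k = e k - (k == a)%:R + (k == b)%:R.
Proof. by rewrite ffunE. Qed.

Lemma shiftv_id a (e : expo n) : shiftv a a e = e.
Proof. by apply/ffunP => k; rewrite shiftvE; ring. Qed.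

Lemma shiftvK a b : cancel (@shiftv n b a) (shiftv a b).
Proof. by move=> e; apply/ffunP => k; rewrite !shiftvE; ring. Qed.

Lemma shiftv_trans a b c (e : expo n) : shiftv c b (shiftv a c e) = shiftv a b e.
Proof. by apply/ffunP => k; rewrite !shiftvE; ring. Qed.

Lemma shiftv_transC a b c (e : expo n) : shiftv a c (shiftv c b e) = shiftv a b e.
Proof. by apply/ffunP => k; rewrite !shiftvE; ring. Qed.

Lemma tact_eq0 a b (f : tseries n V) e : f =1 (fun=> 0) -> tact E mu a b f e = 0.
Proof. by move=> f0; rewrite /tact !f0 (gl_act0 hE) ?scaler0 ?subr0 ?addr0. Qed.

Lemma tact_commutator a b c (f : tseries n V) e : a != b -> a != c -> c != b ->
  tact E mu a b f e
  = tact E mu a c (tact E mu c b f) e - tact E mu c b (tact E mu a c f) e.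
Proof.
move=> /negbTE ab /negbTE ac /negbTE cb.
have cancel_terms (X A B C Z : V) (al be ga de : K) :
    X + A + be *: B + al *: (C + ga *: Z) - (A + al *: C + be *: (B + de *: Z))
    = X + (al * ga - be * de) *: Z.
  rewrite !scalerDr !scalerA scalerBl !opprD !addrA.
  rewrite [LHS](@GRing.add V).[ACl ((2*6)*(3*8)*(4*7)*(1*(5*9)))].
  by rewrite !subrr !add0r addrA.
rewrite /tact ab ac cb !mul0r !scale0r !subr0 !(gl_actD hE) !(gl_actZ hE).
rewrite !shiftv_trans !shiftv_transC.
have := hE.2 a c c b (f e); rewrite eqxx eq_sym ab scale1r scale0r subr0.
move/eqP; rewrite subr_eq => /eqP ->.
rewrite (addrC (E a b _)) cancel_terms [LHS]addrC !shiftvE !eqxx (eq_sym b a).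
rewrite (eq_sym c a) (eq_sym b c) ab ac cb.
by congr (_ + _ *: _); rewrite !intrD ?intrN /= ?mulr0z ?mulr1z; ring.
Qed.

Lemma tact_upper_eq0_of_simple (f : tseries n V) :
  (forall (a : 'I_n) e, tact E mu (inord a) (inord a.+1) f e = 0) ->
  forall a b : 'I_n.+1, (a < b)%N -> forall e, tact E mu a b f e = 0.
Proof.
move=> simple0.
have adj0 (a b : 'I_n.+1) e : nat_of_ord b = a.+1 -> tact E mu a b f e = 0.
  move=> bE; have an : (a < n)%N by have := ltn_ord b; lia.
  have -> : a = inord (Ordinal an).
    by apply: val_inj; rewrite /= inordK //; lia.
  have -> : b = inord (Ordinal an).+1.
    by apply: val_inj; rewrite /= inordK //; lia.
  exact: simple0.
move=> a b ab; have [d] : exists d, nat_of_ord b = (a + d.+1)%N.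
  by exists (b - a.+1)%N; lia.
elim: d a b {ab} => [|d IH] a b bE e; first by apply: adj0; lia.
have b_lt := ltn_ord b.
set c : 'I_n.+1 := inord a.+1.
have cE : nat_of_ord c = a.+1 by rewrite inordK //; lia.
rewrite (@tact_commutator a b c) -?val_eqE /= ?cE; try lia.
rewrite (tact_eq0 _ _ (f := tact E mu c b f)); last by move=> e'; apply: IH; lia.
by rewrite (tact_eq0 _ _ (f := tact E mu a c f)) ?subrr // => e'; apply: adj0.
Qed.

End Series.

Section Indices.
Variable n : nat.

Lemma iext_ord (i : sidx n) (k : 'I_n) : iext i k = i k.
Proof. by rewrite /iext valK. Qed.

Lemma iext_out (i : sidx n) k : (n <= k)%N -> iext i k = 0%N.
Proof. by move=> nk; rewrite /iext insubF // ltnNge nk. Qed.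

Lemma eq_inord (c : 'I_n.+1) k : (k <= n)%N -> (c == inord k) = (val c == k).
Proof. by move=> kn; rewrite -val_eqE /= inordK. Qed.

Definition sidx_incr (i : sidx n) (a : 'I_n) : sidx n :=
  [ffun k => i k + (k == a)]%N.
Definition sidx_decr (i : sidx n) (a : 'I_n) : sidx n :=
  [ffun k => i k - (k == a)]%N.

Lemma iext_incr (i : sidx n) (a : 'I_n) k :
  iext (sidx_incr i a) k = (iext i k + (k == nat_of_ord a))%N.
Proof.
rewrite /iext; case: insubP => [k' _ <-|kn]; first by rewrite ffunE.
by have /negbTE -> : k != a by apply: contraNneq kn => ->.
Qed.

Lemma iext_decr (i : sidx n) (a : 'I_n) k :
  iext (sidx_decr i a) k = (iext i k - (k == nat_of_ord a))%N.
Proof.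
rewrite /iext; case: insubP => [k' _ <-|kn]; first by rewrite ffunE.
by have /negbTE -> : k != a by apply: contraNneq kn => ->.
Qed.

Lemma sidx_incrK (i : sidx n) a : sidx_decr (sidx_incr i a) a = i.
Proof. by apply/ffunP => k; rewrite !ffunE addnK. Qed.

Lemma sidx_decrK (i : sidx n) a : (0 < i a)%N -> sidx_incr (sidx_decr i a) a = i.
Proof.
move=> ia; apply/ffunP => k; rewrite !ffunE.
by case: eqP => [->|] /=; rewrite ?subn0 ?addn0 // subn1 addn1 prednK.
Qed.

Lemma uexpE (i : sidx n) (k : 'I_n.+1) :
  uexp i k
  = (iext i k)%:Z - (if nat_of_ord k is k'.+1 then iext i k' else 0%N)%:Z.
Proof. by rewrite ffunE. Qed.

Lemma uexp_inj : injective (@uexp n).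
Proof.
move=> i j ij.
have iext_eq k : (k <= n)%N -> iext i k = iext j k.
  elim: k => [|k IH] kn.
    have := congr1 (fun f : expo n => f (inord 0)) ij.
    by rewrite !uexpE inordK //=; lia.
  have := congr1 (fun f : expo n => f (inord k.+1)) ij.
  by rewrite !uexpE inordK //= IH ?(ltnW kn) //; lia.
by apply/ffunP => k; rewrite -!iext_ord iext_eq // ltnW.
Qed.

Lemma sum_sidx_incr (i : sidx n) a :
  (\sum_k sidx_incr i a k = (\sum_k i k).+1)%N.
Proof.
rewrite (bigD1 a) // [in RHS](bigD1 a) //= ffunE eqxx addn1 addSn.
by congr (_.+1 + _)%N; apply: eq_bigr => k ka; rewrite ffunE (negbTE ka) addn0.
Qed.

Lemma prod_fact_sidx_incr (i : sidx n) a :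
  (\prod_k (sidx_incr i a k)`! = (i a).+1 * \prod_k (i k)`!)%N.
Proof.
rewrite (bigD1 a) // [in RHS](bigD1 a) //= ffunE eqxx addn1 factS mulnA.
by congr (_ * _)%N; apply: eq_bigr => k ka; rewrite ffunE (negbTE ka) addn0.
Qed.

Lemma uexp_incr (i : sidx n) (a : 'I_n) :
  uexp (sidx_incr i a) = shiftv (inord a.+1) (inord a) (uexp i).
Proof.
have a_lt := ltn_ord a.
apply/ffunP => -[k kn]; rewrite shiftvE !uexpE !eq_inord //=; last by lia.
case: k kn => [|k] kn /=; rewrite !iext_incr.
  by case: (0 =P nat_of_ord a) => [e|ne]; rewrite /= ?e ?subr0; lia.
case: (k =P nat_of_ord a) => [->|ne].
  by rewrite eqxx (_ : (a.+1 == a) = false) /=; lia.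
rewrite (_ : (k.+1 == a.+1) = false); last by apply/eqP; lia.
by case: (k.+1 =P nat_of_ord a) => /=; lia.
Qed.

End Indices.

Section PBW.
Variables (K : fieldType) (n : nat) (V : lmodType K).
Variable E : 'I_n.+1 -> 'I_n.+1 -> V -> V.
Hypothesis hE : gl_action E.
Variables (lam : 'I_n.+1 -> K) (v : V).
Hypothesis hv : hw_vector E lam v.

Definition pbw_factor (i : sidx n) k (x : V) :=
  iter (iext i k) (E (inord k.+1) (inord k)) x.

(* E_{j+2,j+1}^{i_{j+1}} ... E_{n+1,n}^{i_n} v, the last n - j factors of the
   PBW monomial. *)
Definition pbw_tail (i : sidx n) j := foldr (pbw_factor i) v (iota j (n - j)).

Lemma pbw_tail0 (i : sidx n) : pbw E i v = pbw_tail i 0.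
Proof.
rewrite /pbw /pbw_tail subn0 -val_enum_ord foldr_map.
by elim: (enum 'I_n) => //= k s ->; rewrite /pbw_factor iext_ord.
Qed.

Lemma pbw_tailS (i : sidx n) j : (j < n)%N ->
  pbw_tail i j = pbw_factor i j (pbw_tail i j.+1).
Proof. by move=> jn; rewrite /pbw_tail -(subnSK jn). Qed.

Lemma pbw_tail_n (i : sidx n) : pbw_tail i n = v.
Proof. by rewrite /pbw_tail subnn. Qed.

Lemma pbw_tail_split (i : sidx n) j : (j <= n)%N ->
  pbw_tail i 0 = foldr (pbw_factor i) (pbw_tail i j) (iota 0 j).
Proof.
by move=> jn; rewrite /pbw_tail -foldr_cat -iotaD subn0 subnKC.
Qed.

Definition tail_weight (i : sidx n) j (c : 'I_n.+1) : K :=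
  lam c + (if (j < c)%N then iext i c.-1 else 0%N)%:R
        - (if (j <= c)%N then iext i c else 0%N)%:R.

Lemma tail_weightS (i : sidx n) j c : (j < n)%N ->
  tail_weight i j c = tail_weight i j.+1 c
    + (iext i j)%:R * ((c == inord j.+1)%:R - (c == inord j)%:R).
Proof.
move=> jn; rewrite /tail_weight !eq_inord ?(ltnW jn) //.
have [cj|jc|cE] := ltngtP c j; have [cj1|jc1|cE1] := ltngtP c j.+1;
  try lia; rewrite ?cE ?cE1 /=; ring.
Qed.

Lemma has_weight_pbw_tail (i : sidx n) j : (j <= n)%N ->
  has_weight E (pbw_tail i j) (tail_weight i j).
Proof.
move=> jn; rewrite -(subKn jn).
elim: (n - j)%N (leq_subr j n) => [|d IH] dn.
  rewrite subn0 pbw_tail_n; apply: eq_has_weight hv.2 => c.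
  rewrite /tail_weight ltnNge -ltnS ltn_ord /=.
  by case: ifP => [nc|_]; rewrite ?iext_out ?addr0 ?subr0.
have d_lt : (n - d.+1 < n)%N by lia.
have dS : (n - d.+1).+1 = (n - d)%N by lia.
rewrite pbw_tailS // dS; apply: eq_has_weight (has_weight_iter hE _ _ _ (IH _)).
  by move=> c; rewrite (tail_weightS _ _ d_lt) dS.
exact: ltnW.
Qed.

Lemma has_weight_pbw (i : sidx n) :
  has_weight E (pbw E i v) (fun c => lam c - (uexp i c)%:~R).
Proof.
rewrite pbw_tail0; apply: eq_has_weight (has_weight_pbw_tail i (leq0n n)).
move=> -[[|c] cn]; rewrite /tail_weight uexpE intrB -!pmulrn /=; ring.
Qed.

Lemma foldr_pbw_factorZ (i : sidx n) s k x :
  foldr (pbw_factor i) (k *: x) s = k *: foldr (pbw_factor i) x s.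
Proof. by elim: s => //= j s ->; rewrite /pbw_factor (iter_gl_actZ hE). Qed.

Lemma eq_foldr_pbw_factor (i i' : sidx n) s x :
  {in s, forall k, iext i k = iext i' k} ->
  foldr (pbw_factor i) x s = foldr (pbw_factor i') x s.
Proof.
elim: s => //= k s IH ii'; rewrite /pbw_factor ii' ?mem_head // IH // => k' ks.
by apply: ii'; rewrite in_cons ks orbT.
Qed.

Section Raise.
Variable a : 'I_n.
Local Notation A := (inord a : 'I_n.+1).
Local Notation B := (inord a.+1 : 'I_n.+1).

Lemma gl_act_foldr_comm (i : sidx n) s x :
  all (fun k => (k < n)%N && (k != a)) s ->
  E A B (foldr (pbw_factor i) x s) = foldr (pbw_factor i) (E A B x) s.
Proof.
have a_lt := ltn_ord a.
elim: s => //= k s IH /andP[/andP[kn ka] s_ok].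
rewrite /pbw_factor (gl_act_iter_comm hE) ?IH // -val_eqE /= !inordK //.
- by rewrite eqSS eq_sym.
- exact: ltnW.
- exact: ltnW.
Qed.

Lemma raise_pbw_tail (i : sidx n) : E A B (pbw_tail i a.+1) = 0.
Proof.
have a_lt := ltn_ord a.
rewrite /pbw_tail gl_act_foldr_comm; last first.
  by apply/allP => k; rewrite mem_iota => /andP[ak kn]; apply/andP; split; lia.
rewrite hv.1 /=; last by rewrite !inordK //; lia.
by rewrite -(scale0r 0) foldr_pbw_factorZ !scale0r.
Qed.

Lemma raise_pbw (i : sidx n) :
  E A B (pbw E i v)
  = ((i a)%:R * (lam A - lam B + (iext i a.+1)%:R - (i a)%:R + 1))
      *: pbw E (sidx_decr i a) v.
Proof.
have a_lt := ltn_ord a; have a_le := ltnW a_lt.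
have head_ok : {in iota 0 a, forall k, iext i k = iext (sidx_decr i a) k}.
  move=> k; rewrite mem_iota iext_decr => /andP[_ ka].
  by rewrite (_ : (k == a) = false) ?subn0 //; lia.
have tail_ok :
    {in iota a.+1 (n - a.+1), forall k, iext (sidx_decr i a) k = iext i k}.
  move=> k; rewrite mem_iota iext_decr => /andP[ak _].
  by rewrite (_ : (k == a) = false) ?subn0 //; lia.
rewrite !pbw_tail0 (pbw_tail_split i a_le).
rewrite (pbw_tail_split (sidx_decr i a) a_le).
rewrite gl_act_foldr_comm; last first.
  by apply/allP => k; rewrite mem_iota => /andP[_ ka]; apply/andP; split; lia.
rewrite (pbw_tailS i a_lt) (pbw_tailS (sidx_decr i a) a_lt).
rewrite [pbw_factor i a _]/pbw_factor [pbw_factor (sidx_decr i a) a _]/pbw_factor.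
rewrite iext_decr eqxx subn1 !iext_ord.
have AB : A != B by rewrite eq_inord //= inordK ?ltn_eqF //; lia.
rewrite (gl_act_raise_iter hE AB (raise_pbw_tail i)
                           (has_weight_pbw_tail i a_lt)).
rewrite -foldr_pbw_factorZ (eq_foldr_pbw_factor _ head_ok).
rewrite /tail_weight !inordK //.
rewrite !ltnn ltnSn ltnNge leqnSn /=.
congr (foldr _ (_ *: iter _ _ _) _); first by ring.
by rewrite /pbw_tail (eq_foldr_pbw_factor _ tail_ok).
Qed.

End Raise.

End PBW.

Section Ulam.
Variables (K : fieldType) (n : nat) (V : lmodType K).
Variable E : 'I_n.+1 -> 'I_n.+1 -> V -> V.
Hypothesis hE : gl_action E.
Variables (lam : 'I_n.+1 -> K) (v : V).
Hypothesis hv : hw_vector E lam v.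
Variables mu sigma : K.
Local Notation u := (ulam E mu sigma v).

Lemma ulam_uexp (i : sidx n) : u (uexp i) = ucoef mu sigma i *: pbw E i v.
Proof.
rewrite /ulam; case: excluded_middle_informative => [ex|]; last by case; exists i.
by case: constructive_indefinite_description => j /= /uexp_inj ->.
Qed.

Lemma ulam_out e : ~ (exists i, uexp i = e) -> u e = 0.
Proof. by rewrite /ulam; case: excluded_middle_informative. Qed.

Lemma tact_ulam_diag k e : tact E mu k k u e = lam k *: u e.
Proof.
rewrite /tact eqxx mul1r shiftv_id.
case: (excluded_middle_informative (exists i, uexp i = e)) => [[i <-]|none].
  rewrite ulam_uexp (gl_actZ hE) (has_weight_pbw hE hv) !scalerA.
  by rewrite -!scalerDl -scalerBl; congr (_ *: _); ring.
by rewrite ulam_out // (gl_act0 hE) !scaler0 addr0 subr0.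
Qed.

Lemma fallingS (c : K) k : falling c k.+1 = falling c k * (c - k%:R).
Proof. by rewrite /falling big_ord_recr. Qed.

End Ulam.

Section SingularVector.
Variables (K : numFieldType) (n : nat) (V : lmodType K).
Variable E : 'I_n.+1 -> 'I_n.+1 -> V -> V.
Hypothesis hE : gl_action E.
Variables (lam : 'I_n.+1 -> K) (v : V).
Hypothesis hv : hw_vector E lam v.
Variables mu sigma : K.
Local Notation u := (ulam E mu sigma v).

Hypothesis sigma_nat : forall k : nat, sigma != k%:R.
Hypothesis lam_mu :
  forall a : nat, (a < n.-1)%N -> lam (inord a) - lam (inord a.+1) = mu.
Hypothesis lam_sigma : lam (inord n.-1) - lam (inord n) = sigma.

Lemma falling_sigma_neq0 k : falling sigma k != 0.
Proof. by apply/prodf_neq0 => j _; rewrite subr_eq0 sigma_nat. Qed.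

Lemma ucoef_incr (i : sidx n) (a : 'I_n) :
  ucoef mu sigma (sidx_incr i a)
    * ((i a).+1%:R
       * (lam (inord a) - lam (inord a.+1) + (iext i a.+1)%:R - (i a)%:R))
  + ((iext i a.+1)%:R - (i a)%:R + mu) * ucoef mu sigma i = 0.
Proof.
have a_lt := ltn_ord a.
have fact_neq0 : ((\prod_k (i k)`!)%:R : K) != 0.
  by rewrite pnatr_eq0 -lt0n prodn_gt0 // => k; rewrite fact_gt0.
have ia1_neq0 : 1 + (i a)%:R != 0 :> K by rewrite nat1r pnatr_eq0.
rewrite /ucoef sum_sidx_incr prod_fact_sidx_incr iext_incr exprS natrM.
have [a_lt1|a_gt|a_last] := ltngtP a n.-1; [|lia|].
  rewrite addn0 lam_mu //.
  by field; rewrite ia1_neq0 fact_neq0 falling_sigma_neq0.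
have lam_a : lam (inord a) - lam (inord a.+1) = sigma.
  by rewrite a_last prednK // (leq_ltn_trans (leq0n _) a_lt).
have sigma_ia : sigma - (i a)%:R != 0 by rewrite subr_eq0 sigma_nat.
rewrite lam_a addn1 fallingS fallingS -a_last iext_ord iext_out; last lia.
by field; rewrite ia1_neq0 fact_neq0 falling_sigma_neq0 sigma_ia.
Qed.

Lemma tact_ulam_simple_eq0 (a : 'I_n) e :
  tact E mu (inord a) (inord a.+1) u e = 0.
Proof.
have a_lt := ltn_ord a.
have /negbTE AB : (inord a : 'I_n.+1) != inord a.+1.
  by rewrite eq_inord //= inordK ?ltn_eqF //; lia.
rewrite /tact AB mul0r scale0r subr0.
case: (excluded_middle_informative (exists i, uexp i = e)) => [[i <-]|none];
  last first.
  rewrite !ulam_out ?(gl_act0 hE) ?scaler0 ?addr0 // => -[j je].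
  by apply: none; exists (sidx_incr j a); rewrite uexp_incr je shiftvK.
rewrite ulam_uexp (gl_actZ hE) (raise_pbw hE hv) scalerA.
have [ia0|ia_pos] := posnP (i a).
  rewrite ia0 mul0r mulr0 scale0r add0r ulam_out ?scaler0 // => -[j je].
  have /uexp_inj ij : uexp (sidx_incr j a) = uexp i.
    by rewrite uexp_incr je shiftvK.
  by move: ia0; rewrite -ij ffunE eqxx addn1.
have [j ->] : exists j, i = sidx_incr j a.
  by exists (sidx_decr i a); rewrite sidx_decrK.
rewrite uexp_incr shiftvK ulam_uexp sidx_incrK scalerA -scalerDl.
rewrite uexpE inordK //=.
rewrite iext_incr ffunE eqxx (_ : (a.+1 == a) = false) ?addn0 ?addn1; last lia.
rewrite intrB -!pmulrn iext_ord -[(j a).+1]addn1 natrD opprD addrA subrK.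
by rewrite natr1 ucoef_incr scale0r.
Qed.

End SingularVector.

(* The paper's n (>= 3) is written m.+3 here; indices are 0-indexed 'I_(m.+3). *)
Theorem lemma3p1 (R : realType) (m : nat)
    (mu : R[i]) (lam : 'I_(m.+3) -> R[i])
    (hlam : forall k : nat, (k.+2 < m.+3)%N ->
              lam (inord k) - lam (inord k.+1) = mu)
    (hsigma : forall k : nat, lam (inord m.+1) - lam (inord m.+2) != k%:R)
    (V : lmodType R[i]) (E : 'I_(m.+3) -> 'I_(m.+3) -> V -> V) (v : V)
    (hV : is_verma E lam v) :
  let sigma := lam (inord m.+1) - lam (inord m.+2) in
  let u := ulam E mu sigma v in
  (forall a b : 'I_(m.+3), (a < b)%N -> forall e, tact E mu a b u e = 0) /\
  (forall k : 'I_(m.+3), forall e, tact E mu k k u e = lam k *: u e).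
Proof.
move=> sigma u; have [hE [hv _]] := hV.
split; last exact: (tact_ulam_diag hE hv mu sigma).
move=> a b ab; apply: (tact_upper_eq0_of_simple hE _ ab) => c e.
by apply: (tact_ulam_simple_eq0 hE hv hsigma) => // k k_lt; apply: hlam; lia.
Qed.
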